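(* Let $\mathcal H$ be a separable Hilbert space, $(X,\mathcal M,\mu)$ a measure space, and $\{\phi_t\}_{t\in X}$ a continuous Bessel family over $X$ in $\mathcal H$. Then there exist a $\sigma$-finite subset $X'\subset X$ and a $\sigma$-algebra $\mathcal M'\subset\{E\cap X':E\in\mathcal M\}$ such that: (i) $\phi_t=0$ for all $t\in X\setminus X'$; (ii) the restriction $\{\phi_t\}_{t\in X'}$ is a continuous Bessel family over $(X',\mathcal M',\mu)$; (iii) the measure algebra of $(X',\mathcal M',\mu)$ is separable.
   Context: A family $\{\phi_t\}_{t\in X}$ of vectors in $\mathcal H$ is a continuous Bessel family (with bound $B$) over the measure space $(X,\mu)$ if (i) for each $f\in\mathcal H$ the function $t\mapsto\langle f,\phi_t\rangle$ is measurable, and (ii) there is $B<\infty$ with $\int_X|\langle f,\phi_t\rangle|^2\,d\mu(t)\le B\|f\|^2$ for all $f\in\mathcal H$. The measure algebra of a measure space $(X,\mathcal N,\mu)$ consists of equivalence classes of sets in $\mathcal N$ under $E\sim F\iff\mu(E\triangle F)=0$; it is called separable if the set of (classes of) sets of finite measure with the metric $\rho(E,F)=\mu(E\triangle F)$ is a separable metric space. *)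

From HB Require Import structures.
From mathcomp Require Import all_boot all_order all_algebra.
From mathcomp Require Import all_classical all_reals all_analysis.
From mathcomp Require Import complex.
Set Implicit Arguments. Unset Strict Implicit. Unset Printing Implicit Defensive.
Import Order.TTheory GRing.Theory Num.Theory.
Local Open Scope classical_set_scope.
Local Open Scope ring_scope.

Record hilbert (R : realType) (H : lmodType R[i]) := Hilbert {
  ip : H -> H -> R[i];
  ip_linl : forall (a : R[i]) (x y z : H), ip (a *: x + y) z = a * ip x z + ip y z;
  ip_conj : forall x y : H, ip y x = (ip x y)^*;
  ip_ge0 : forall x : H, 0 <= ip x x;
  ip_eq0 : forall x : H, ip x x = 0 -> x = 0 }.

Definition hnorm (R : realType) (H : lmodType R[i]) (hs : hilbert H) (x : H) : R :=
  Num.sqrt (complex.Re (ip hs x x)).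

Definition hcomplete (R : realType) (H : lmodType R[i]) (hs : hilbert H) :=
  forall u : nat -> H,
    (forall e : R, 0 < e -> exists N, forall m n, (N <= m)%N -> (N <= n)%N ->
        hnorm hs (u m - u n) < e) ->
    exists l : H, forall e : R, 0 < e -> exists N, forall n, (N <= n)%N ->
        hnorm hs (u n - l) < e.

Definition hseparable (R : realType) (H : lmodType R[i]) (hs : hilbert H) :=
  exists D : set H, countable D /\
    forall (x : H) (e : R), 0 < e -> exists2 y, D y & hnorm hs (x - y) < e.

(* measurability of a complex-valued function on the domain D with respect
   to the sigma-algebra G (of subsets of D): real and imaginary parts are
   measurable (Borel sigma-algebra of C = R^2) *)
Definition cmeasurable_in (R : realType) (T : Type) (D : set T)
    (G : set (set T)) (g : T -> R[i]) :=
  forall B : set R, measurable B ->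
    G (D `&` (fun t => complex.Re (g t)) @^-1` B) /\
    G (D `&` (fun t => complex.Im (g t)) @^-1` B).

Definition cont_bessel (R : realType) (H : lmodType R[i]) (hs : hilbert H)
    (d : measure_display) (X : measurableType d) (mu : {measure set X -> \bar R})
    (D : set X) (G : set (set X)) (phi : X -> H) :=
  (forall f : H, cmeasurable_in D G (fun t => ip hs f (phi t))) /\
  exists B : R, forall f : H,
    (\int[mu]_(t in D) ((Normc.normc (ip hs f (phi t))) ^+ 2)%:E
      <= (B * hnorm hs f ^+ 2)%:E)%E.

Definition sigma_finite_subset (R : realType) (d : measure_display)
    (X : measurableType d) (mu : {measure set X -> \bar R}) (X' : set X) :=
  exists F : nat -> set X, (forall n, measurable (F n)) /\
    (forall n, (mu (F n) < +oo)%E) /\ X' = \bigcup_n F n.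

(* separability of the measure algebra of (_, G, mu): the sets of G of finite
   measure, with the (pseudo)metric mu(E symdiff F), form a separable space *)
Definition meas_alg_separable (R : realType) (d : measure_display)
    (X : measurableType d) (mu : {measure set X -> \bar R}) (G : set (set X)) :=
  exists S : set (set X), countable S /\
    (forall F, S F -> G F /\ (mu F < +oo)%E) /\
    forall E, G E -> (mu E < +oo)%E -> forall e : R, 0 < e ->
      exists2 F, S F & (mu ((E `\` F) `|` (F `\` E)) < e%:E)%E.

From HB Require Import structures.
From mathcomp Require Import all_boot all_order all_algebra.
From mathcomp Require Import all_classical all_reals all_analysis.
From mathcomp Require Import complex lra measurable_realfun.
Set Implicit Arguments. Unset Strict Implicit. Unset Printing Implicit Defensive.
Import Order.TTheory GRing.Theory Num.Theory.
Import numFieldNormedType.Exports.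
Local Open Scope classical_set_scope.
Local Open Scope ring_scope.

(* Fix a dense sequence (f_n) of H. The countably many real functions
   t |-> Re <f_n, phi_t> and t |-> Im <f_n, phi_t> generate a countably
   generated sigma-algebra G contained in M, and by density and Cauchy-Schwarz
   every t |-> <f, phi_t> is a pointwise limit of them, hence G-measurable.
   The Bessel bound and Markov's inequality give each set
   {t | 1/(k+1) < |Re <f_n, phi_t>|} finite measure; X' is their union, and
   off X' the vector phi_t is orthogonal to every f_n, hence zero. M' is the
   trace of G on X'. Finally the measure algebra of a countably generated
   sigma-algebra over a sigma-finite set is separable: the finite Boolean
   combinations of the generators, cut down to finite unions of the
   finite-measure pieces of X', are dense, because the sets that they
   approximate form a sigma-algebra. *)

Section InnerProduct.
Local Open Scope complex_scope.
Context (R : realType) (H : lmodType R[i]) (hs : hilbert H).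
Local Notation ip := (ip hs).

Lemma ip0l z : ip 0 z = 0.
Proof.
have := ip_linl hs 1 0 0 z; rewrite scale1r addr0 mul1r.
by move/(congr1 (fun w => w - ip 0 z)); rewrite addrK subrr.
Qed.

Lemma ipDl x y z : ip (x + y) z = ip x z + ip y z.
Proof. by rewrite -[x]scale1r ip_linl mul1r scale1r. Qed.

Lemma ipZl a x z : ip (a *: x) z = a * ip x z.
Proof. by rewrite -[a *: x]addr0 ip_linl ip0l addr0. Qed.

Lemma ipBl x y z : ip (x - y) z = ip x z - ip y z.
Proof. by rewrite ipDl -scaleN1r ipZl mulN1r. Qed.

Lemma ipBr x y z : ip z (x - y) = ip z x - ip z y.
Proof. by rewrite ip_conj ipBl rmorphB; congr (_ - _); rewrite [RHS]ip_conj. Qed.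

Lemma Re_ip_ge0 x : 0 <= complex.Re (ip x x).
Proof. by have := ip_ge0 hs x; rewrite lecE => /andP[]. Qed.

Lemma Re_ip_eq0 x : complex.Re (ip x x) = 0 -> x = 0.
Proof.
move=> Re0; apply: (@ip_eq0 _ _ hs x); apply/eqP.
by rewrite eq_complex /= Re0 (ger0_Im (ip_ge0 hs x)) !eqxx.
Qed.

Lemma Re_ip_gt0 x : x != 0 -> 0 < complex.Re (ip x x).
Proof.
move=> x0; rewrite lt_neqAle Re_ip_ge0 andbT eq_sym.
by apply: contra x0 => /eqP/Re_ip_eq0 ->.
Qed.

Lemma hnorm_ge0 x : 0 <= hnorm hs x.
Proof. exact: sqrtr_ge0. Qed.

Lemma hnorm_sqr x : hnorm hs x ^+ 2 = complex.Re (ip x x).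
Proof. by rewrite /hnorm sqr_sqrtr // Re_ip_ge0. Qed.

Lemma Re_ip_quadratic_ge0 (s : R) x y :
  0 <= s ^+ 2 * complex.Re (ip x x) - 2 * s * complex.Re (ip x y)
       + complex.Re (ip y y).
Proof.
have := Re_ip_ge0 (s%:C *: x - y).
rewrite ipBl !ipBr !ipZl [ip x (_ *: x)]ip_conj [ip y (_ *: x)]ip_conj !ipZl.
by case: (ip x x) => a b; case: (ip x y) => c e; case: (ip y y) => f g /=; nra.
Qed.

Lemma normr_Re_ip_le x y : `|complex.Re (ip x y)| <= hnorm hs x * hnorm hs y.
Proof.
have [->|x0] := eqVneq x 0; first by rewrite ip0l normr0 mulr_ge0 ?hnorm_ge0.
have := Re_ip_gt0 x0; set Nx := complex.Re (ip x x) => Nx_gt0.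
set r := complex.Re (ip x y); have Ny_ge0 := Re_ip_ge0 y.
have := Re_ip_quadratic_ge0 (r / Nx) x y; rewrite -/Nx -/r.
have : r / Nx * Nx = r by rewrite mulfVK // gt_eqF.
set t := r / Nx => tNx quad.
rewrite -ler_sqr ?nnegrE ?mulr_ge0 ?hnorm_ge0 // exprMn !hnorm_sqr.
by rewrite real_normK ?num_real //; nra.
Qed.

Definition hdense_seq (fs : nat -> H) :=
  forall x (e : R), 0 < e -> exists n, hnorm hs (x - fs n) < e.

Lemma hseparable_dense_seq : hseparable hs -> exists fs, hdense_seq fs.
Proof.
move=> [D [cD dD]]; have [fi fiI] := countable_injP _ cD.
exists (fun n => xget 0 [set y | D y /\ fi y = n]) => x e e0.
have [y Dy xy] := dD x e e0; exists (fi y).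
have [Dz fz] :=
  xgetPex 0 (ex_intro (fun z => D z /\ fi z = fi y) y (conj Dy erefl)).
by rewrite (fiI _ _ _ _ fz) ?inE.
Qed.

Lemma hdense_seq_cvg_Re_ip fs : hdense_seq fs -> forall f,
  exists s : nat -> nat, forall y,
    (fun k => complex.Re (ip (fs (s k)) y)) @ \oo --> complex.Re (ip f y).
Proof.
move=> fs_dense f.
have approx k : exists n, hnorm hs (f - fs n) < k.+1%:R^-1.
  by apply: fs_dense; rewrite invr_gt0.
have [s sP] := choice approx.
exists s => y; apply/cvgrPdist_lt => e e0.
have ny_ge0 := hnorm_ge0 y.
have e'_gt0 : 0 < e / (hnorm hs y + 1) by rewrite divr_gt0 // ltr_wpDl.
near=> k; rewrite -raddfB /= -ipBl.
apply: le_lt_trans (normr_Re_ip_le _ _) _.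
apply: (@le_lt_trans _ _ (k.+1%:R^-1 * (hnorm hs y + 1))).
  apply: ler_pM; rewrite ?hnorm_ge0 ?lerDl //; exact: ltW (sP k).
rewrite -ltr_pdivlMr ?ltr_wpDl //.
by near: k; exact: (near_infty_natSinv_lt (PosNum e'_gt0)).
Unshelve. all: by end_near.
Qed.

Lemma hdense_seq_orthogonal_eq0 fs x :
  hdense_seq fs -> (forall n, ip (fs n) x = 0) -> x = 0.
Proof.
move=> fs_dense fs_x; apply/eqP/negPn/negP => x0.
have nx_gt0 : 0 < hnorm hs x by rewrite /hnorm sqrtr_gt0 Re_ip_gt0.
have [n ltxn] := fs_dense x _ nx_gt0.
have yx := fs_x n; have xy : ip x (fs n) = 0 by rewrite ip_conj yx conjC0.
have : hnorm hs (x - fs n) ^+ 2 = hnorm hs x ^+ 2 + complex.Re (ip (fs n) (fs n)).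
  by rewrite !hnorm_sqr ipBl !ipBr yx xy subr0 sub0r opprK raddfD.
by have := Re_ip_ge0 (fs n); have := hnorm_ge0 (x - fs n); nra.
Qed.

End InnerProduct.

Lemma Re_mulNi (R : realType) (z : R[i]) :
  complex.Re (- 'i%C * z) = complex.Im z.
Proof. by case: z => a b /=; lra. Qed.

Lemma normc_sqr (R : realType) (z : R[i]) :
  Normc.normc z ^+ 2 = complex.Re z ^+ 2 + complex.Im z ^+ 2.
Proof. by case: z => a b /=; rewrite sqr_sqrtr // addr_ge0 // sqr_ge0. Qed.

Section SigmaAlgebras.
Context d (X : measurableType d).

Lemma sigma_algebra_trace (D : set X) :
  measurable D -> sigma_algebra D [set E | measurable E /\ E `<=` D].
Proof.
move=> mD; split.
- by split; [exact: measurable0|].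
- by move=> A [mA _]; split; [exact: measurableD|move=> x []].
- move=> A mA; split; first by apply: bigcupT_measurable => n; exact: (mA n).1.
  by move=> x [n _ /(mA n).2].
Qed.

Lemma g_sigma_range_sub_measurable (I : Type) (c : I -> set X) :
  (forall i, measurable (c i)) -> <<s range c >> `<=` measurable.
Proof.
move=> mc; apply: smallest_sub; first exact: sigma_algebra_measurable.
by move=> _ [i _ <-].
Qed.

End SigmaAlgebras.

Section RatSublevels.
Context d (X : measurableType d) (R : realType) (h : nat -> X -> R).

Definition rat_sublevel (p : nat * rat) : set X := [set t | h p.1 t < ratr p.2].

Local Notation T0 := (g_sigma_algebraType (range rat_sublevel)).

Lemma g_sigma_sublevel n x : <<s range rat_sublevel >> [set t | h n t < x].
Proof.
pose A k : set X := if @choice.unpickle rat k is Some q then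
  if ratr q < x then rat_sublevel (n, q) else set0 else set0.
have -> : [set t | h n t < x] = \bigcup_k A k.
  apply/seteqP; split => [t /= ht|t [k _]].
    have [q] := rat_in_itvoo ht; rewrite in_itv /= => /andP[q1 q2].
    by exists (choice.pickle q); [|rewrite /A choice.pickleK q2].
  rewrite /A; case: (choice.unpickle k) => [q|] //.
  by case: ifP => // qx /lt_trans; apply.
apply: (@bigcupT_measurable _ T0) => k; rewrite /A.
case: (choice.unpickle k) => [q|]; last exact: (@measurable0 _ T0).
case: ifP => _; last exact: (@measurable0 _ T0).
by apply: sub_sigma_algebra; exists (n, q).
Qed.

Lemma measurable_fun_g_sigma_rat_sublevel n :
  measurable_fun [set: T0] (h n : T0 -> R).
Proof.
apply: (@measurability _ _ T0 R setT (h n) (@RGenInftyO.G R)).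
  exact: RGenInftyO.measurableE.
move=> _ [_ [x ->] <-].
have -> : setT `&` h n @^-1` `]-oo, x[ = [set t | h n t < x].
  by apply/seteqP; split => t /=; rewrite in_itv /=; [case|].
exact: g_sigma_sublevel.
Qed.

Lemma g_sigma_cvg_preimage (g : X -> R) (s : nat -> nat) (B : set R) :
  (forall t, (fun k => h (s k) t) @ \oo --> g t) -> measurable B ->
  <<s range rat_sublevel >> (g @^-1` B).
Proof.
move=> cvg_g mB.
have mg : measurable_fun [set: T0] (g : T0 -> R).
  apply: (@measurable_fun_cvg _ T0 R setT (fun k => h (s k))) => [k|t _].
    exact: measurable_fun_g_sigma_rat_sublevel.
  exact: cvg_g.
by have := mg measurableT _ mB; rewrite setTI.
Qed.

End RatSublevels.

Section MeasureLemmas.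
Local Open Scope ereal_scope.
Context d (X : measurableType d) (R : realType) (mu : {measure set X -> \bar R}).

Lemma le_measure_setU2 (A B C : set X) : A `<=` B `|` C ->
  measurable A -> measurable B -> measurable C -> mu A <= mu B + mu C.
Proof.
move=> ABC mA mB mC; apply: le_trans (measureU2 mu mB mC).
by apply: le_measure => //; rewrite inE //; exact: measurableU.
Qed.

Lemma measure_lt_pinfty_markov (F : X -> R) (A : set X) (c b : R) :
  measurable A -> (0 < c)%R -> measurable_fun setT (EFin \o F) ->
  (forall t, (0 <= F t)%R) -> (forall t, A t -> (c <= F t)%R) ->
  \int[mu]_t (F t)%:E <= b%:E -> mu A < +oo.
Proof.
move=> mA c_gt0 mF F_ge0 cF intF.
have : c%:E * mu A <= b%:E.
  rewrite -integral_cst //; apply: le_trans intF.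
  apply: (@le_trans _ _ (\int[mu]_(t in A) (F t)%:E)).
    apply: ge0_le_integral => //; first by move=> t _; rewrite /= lee_fin ltW.
    exact: measurable_funS mF.
  by apply: ge0_subset_integral => // t _; rewrite lee_fin.
case: (mu A) (measure_ge0 mu A) => [r _ _| _ |//]; first exact: ltry.
by rewrite gt0_muley ?lte_fin // leNgt ltry.
Qed.

Lemma measure_setD_bigsetU_lt (E : set X) (A : nat -> set X) :
  measurable E -> mu E < +oo -> (forall n, measurable (A n)) ->
  E `<=` \bigcup_n A n ->
  forall e : R, (0 < e)%R ->
    exists N, mu (E `\` \big[setU/set0]_(j < N) A j) < e%:E.
Proof.
move=> mE finE mA EA e e_gt0.
pose F N := E `\` \big[setU/set0]_(j < N) A j.
have mF N : measurable (F N).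
  by apply: measurableD => //; exact: bigsetU_measurable.
have F_noninc : nonincreasing_seq F.
  apply/nonincreasing_seqP => N; apply/subsetPset => x [Ex].
  by rewrite big_ord_recr /= => nAx; split => // Ax; apply: nAx; left.
have capF : \bigcap_N F N = set0.
  apply/seteqP; split => // x Fx; have [Ex _] := Fx 0%N I.
  have [j _ Ajx] := EA x Ex; have [_] := Fx j.+1 I; apply.
  exact: (bigsetU_sup (ltnSn j)).
have F0 : mu (F 0%N) < +oo by rewrite /F big_ord0 setD0.
have := nonincreasing_cvg_mu F0 mF _ F_noninc.
rewrite capF measure0 => /(_ measurable0) /fine_cvgP[finF cvgF].
have [N _ FN] := filterI finF (cvgr_lt (0 : R) cvgF e e_gt0).
by exists N; have [/= finFN] := FN N (leqnn N); rewrite -lte_fin fineK.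
Qed.

End MeasureLemmas.

(* Finite Boolean combinations of the sets [c i], encoded as [GenTree.tree I]
   so that they form a countable type when [I] is countable:
   [Node 0 [:: t]] is a complement, [Node 1 [:: t1; t2]] a union, and every
   other node is empty. *)
Fixpoint setterm (I T : Type) (c : I -> set T) (t : GenTree.tree I) : set T :=
  match t with
  | GenTree.Leaf i => c i
  | GenTree.Node 0 [:: t1] => ~` setterm c t1
  | GenTree.Node 1 [:: t1; t2] => setterm c t1 `|` setterm c t2
  | _ => set0
  end.

Lemma measurable_setterm d (X : measurableType d) (I : Type) (c : I -> set X) :
  (forall i, measurable (c i)) -> forall t, measurable (setterm c t).
Proof.
move=> mc; fix IH 1; case => [i|[|[|n]] [|t1 [|t2 [|t3 l]]]] /=;
  by [exact: mc|exact: measurableC|exact: measurableU|exact: measurable0].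
Qed.

Definition symdiff T (A B : set T) := (A `\` B) `|` (B `\` A).

Section Symdiff.
Context (T : Type).
Implicit Types A B C D K : set T.

Lemma symdiffxx A : symdiff A A = set0.
Proof. by rewrite /symdiff setDv setU0. Qed.

Lemma symdiff_setCI A B K :
  symdiff ((setT `\` A) `&` K) (~` B `&` K) = symdiff (A `&` K) (B `&` K).
Proof.
by apply/seteqP; split => x; rewrite /symdiff /=;
  have := EM (A x); have := EM (B x); have := EM (K x); tauto.
Qed.

Lemma symdiff_setUI A B C D K :
  symdiff ((A `|` B) `&` K) ((C `|` D) `&` K)
  `<=` symdiff (A `&` K) (C `&` K) `|` symdiff (B `&` K) (D `&` K).
Proof.
by move=> x; rewrite /symdiff /=; have := EM (A x); have := EM (B x);
  have := EM (C x); have := EM (D x); have := EM (K x); tauto.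
Qed.

Lemma symdiff_sub_setD A B C K : B `<=` A ->
  symdiff (A `&` K) (C `&` K)
  `<=` ((A `&` K) `\` B) `|` symdiff (B `&` K) (C `&` K).
Proof.
by move=> BA x; have := BA x; rewrite /symdiff /=; have := EM (A x);
  have := EM (B x); have := EM (C x); have := EM (K x); tauto.
Qed.

Lemma symdiff_setI_sub A B K :
  symdiff A (B `&` K) `<=` (A `\` K) `|` symdiff (A `&` K) (B `&` K).
Proof.
by move=> x; rewrite /symdiff /=;
  have := EM (A x); have := EM (B x); have := EM (K x); tauto.
Qed.

End Symdiff.

Lemma measurable_symdiff d (X : measurableType d) (A B : set X) :
  measurable A -> measurable B -> measurable (symdiff A B).
Proof. by move=> mA mB; apply: measurableU; apply: measurableD. Qed.

Section SettermApproximation.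
Local Open Scope ereal_scope.
Context d (X : measurableType d) (R : realType) (mu : {measure set X -> \bar R}).
Context (I : Type) (c : I -> set X) (K : set X).
Hypotheses (mc : forall i, measurable (c i)) (mK : measurable K).
Hypothesis finK : mu K < +oo.

Definition setterm_approximable (E : set X) := measurable E /\
  forall e : R, (0 < e)%R ->
    exists t, mu (symdiff (E `&` K) (setterm c t `&` K)) < e%:E.

Let measurable_symdiffI A B : measurable A -> measurable B ->
  measurable (symdiff (A `&` K) (B `&` K)).
Proof. by move=> mA mB; apply: measurable_symdiff; exact: measurableI. Qed.

Let mS := measurable_setterm mc.

Lemma setterm_approximable_setterm t : setterm_approximable (setterm c t).
Proof. by split=> // e e_gt0; exists t; rewrite symdiffxx measure0 lte_fin. Qed.

Lemma setterm_approximable_set0 : setterm_approximable set0.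
Proof. exact: (setterm_approximable_setterm (GenTree.Node 2 [::])). Qed.

Lemma setterm_approximable_setC A :
  setterm_approximable A -> setterm_approximable (setT `\` A).
Proof.
move=> [mA appA]; split=> [|e /appA[t At]]; first exact: measurableD.
by exists (GenTree.Node 0 [:: t]); rewrite /= symdiff_setCI.
Qed.

Lemma setterm_approximable_setU A B : setterm_approximable A ->
  setterm_approximable B -> setterm_approximable (A `|` B).
Proof.
move=> [mA appA] [mB appB]; split=> [|e e_gt0]; first exact: measurableU.
have e2_gt0 : (0 < e / 2)%R by rewrite divr_gt0.
have [s1 As1] := appA _ e2_gt0; have [s2 Bs2] := appB _ e2_gt0.
exists (GenTree.Node 1 [:: s1; s2]); rewrite [e]splitr EFinD.
apply: le_lt_trans (lteD As1 Bs2).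
apply: le_measure_setU2; first exact: symdiff_setUI.
- exact: measurable_symdiffI (measurableU _ _ mA mB) (mS _).
- exact: measurable_symdiffI mA (mS s1).
- exact: measurable_symdiffI mB (mS s2).
Qed.

Lemma setterm_approximable_bigsetU (A : nat -> set X) N :
  (forall n, setterm_approximable (A n)) ->
  setterm_approximable (\big[setU/set0]_(j < N) A j).
Proof.
move=> appA; elim: N => [|N IH].
  by rewrite big_ord0; exact: setterm_approximable_set0.
by rewrite big_ord_recr /=; exact: setterm_approximable_setU.
Qed.

Lemma setterm_approximable_bigcup (A : nat -> set X) :
  (forall n, setterm_approximable (A n)) ->
  setterm_approximable (\bigcup_n A n).
Proof.
move=> appA; have mA n := (appA n).1.
have mU : measurable (\bigcup_n A n) by exact: bigcupT_measurable.
split=> // e e_gt0; have e2_gt0 : (0 < e / 2)%R by rewrite divr_gt0.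
have finUK : mu (\bigcup_n A n `&` K) < +oo.
  exact: le_lt_trans (measureIr _ _ _) finK.
have [N UN] := measure_setD_bigsetU_lt (measurableI _ _ mU mK) finUK mA
  (@subIsetl _ _ _) e2_gt0.
have [mUN /(_ _ e2_gt0)[t UNt]] := setterm_approximable_bigsetU N appA.
exists t; rewrite [e]splitr EFinD; apply: le_lt_trans (lteD UN UNt).
apply: le_measure_setU2; first by apply: symdiff_sub_setD; exact: bigsetU_bigcup.
- exact: measurable_symdiffI mU (mS t).
- exact: measurableD (measurableI _ _ mU mK) mUN.
- exact: measurable_symdiffI mUN (mS t).
Qed.

Lemma g_sigma_setterm_approximable :
  <<s range c >> `<=` setterm_approximable.
Proof.
apply: smallest_sub; last first.
  by move=> _ [i _ <-]; exact: (setterm_approximable_setterm (GenTree.Leaf i)).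
split; [exact: setterm_approximable_set0|exact: setterm_approximable_setC|
        exact: setterm_approximable_bigcup].
Qed.

End SettermApproximation.

Lemma meas_alg_separable_g_sigma d (X : measurableType d) (R : realType)
  (mu : {measure set X -> \bar R}) (I : countType) (c : I -> set X)
  (P : nat -> set X) :
  (forall i, measurable (c i)) -> (forall j, <<s range c >> (P j)) ->
  (forall j, (mu (P j) < +oo)%E) ->
  meas_alg_separable mu [set E | <<s range c >> E /\ E `<=` \bigcup_j P j].
Proof.
move=> mc GP finP; pose T0 := g_sigma_algebraType (range c).
have GM := g_sigma_range_sub_measurable mc.
pose K m := \big[setU/set0]_(j < m) P j.
have GK m : <<s range c >> (K m).
  by apply: (@bigsetU_measurable _ T0) => j _; exact: GP.
have mK m : measurable (K m) := GM _ (GK m).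
have finK m : (mu (K m) < +oo)%E.
  elim: m => [|m IH]; first by rewrite /K big_ord0 measure0.
  rewrite /K big_ord_recr /=.
  apply: le_lt_trans (measureU2 mu (mK m) (GM _ (GP m))) _.
  exact: lte_add_pinfty IH (finP m).
exists [set setterm c p.1 `&` K p.2 | p in [set: GenTree.tree I * nat]]; split.
  exact: (sub_countable (card_image_le _ _) (countableP _)).
split.
  move=> _ [[t m] _ <-]; split; last first.
    apply: le_lt_trans (finK m).
    exact: measureIr (measurable_setterm mc t) (mK m).
  split; last by move=> x [_ Kx]; exact: bigsetU_bigcup Kx.
  apply: (@measurableI _ T0); last exact: GK.
  apply: (measurable_setterm (X := T0)) => i.
  by apply: sub_sigma_algebra; exists i.
move=> E [GE EP] finE e e_gt0; have e2_gt0 : 0 < e / 2 by rewrite divr_gt0.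
have mE := GM _ GE.
have [m Em] := measure_setD_bigsetU_lt mE finE (fun j => GM _ (GP j)) EP e2_gt0.
have [_ /(_ _ e2_gt0)[t Et]] :=
  g_sigma_setterm_approximable mc (mK m) (finK m) GE.
exists (setterm c t `&` K m); first by exists (t, m).
rewrite [e]splitr EFinD; apply: le_lt_trans (lteD Em Et).
have mt := measurable_setterm mc t.
apply: le_measure_setU2; first exact: symdiff_setI_sub.
- exact: measurable_symdiff mE (measurableI _ _ mt (mK m)).
- exact: measurableD mE (mK m).
- by apply: measurable_symdiff; exact: measurableI.
Qed.

Section BesselSupport.
Context (R : realType) (H : lmodType R[i]) (hs : hilbert H) (fs : nat -> H).
Hypothesis fs_dense : hdense_seq hs fs.
Context (d : measure_display) (X : measurableType d)
  (mu : {measure set X -> \bar R}) (phi : X -> H).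
Hypothesis phi_bessel : cont_bessel hs mu setT measurable phi.

Local Notation Re_ip f := (fun t => complex.Re (ip hs f (phi t))).

(* Re <-i f, x> = Im <f, x>: the probes make both the real and the imaginary
   parts of <f_n, phi_t> available as real parts. *)
Definition probe n := if odd n then (- 'i%C) *: fs n./2 else fs n./2.

Definition probe_coord n t := complex.Re (ip hs (probe n) (phi t)).

Local Notation G := <<s range (rat_sublevel probe_coord) >>.
Local Notation T0 := (g_sigma_algebraType (range (rat_sublevel probe_coord))).

Lemma Im_ip_Re f x : complex.Im (ip hs f x) = complex.Re (ip hs (- 'i%C *: f) x).
Proof. by rewrite ipZl Re_mulNi. Qed.

Lemma measurable_Re_ip f : measurable_fun setT (Re_ip f).
Proof. by move=> _ B mB; exact: (phi_bessel.1 f B mB).1. Qed.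

Lemma measurable_normc_ip f :
  measurable_fun setT (fun t => (Normc.normc (ip hs f (phi t)) ^+ 2)%:E).
Proof.
apply/measurable_EFinP; under eq_fun do rewrite normc_sqr.
apply: measurable_funD; apply: measurable_funX; first exact: measurable_Re_ip.
by move=> _ B mB; exact: (phi_bessel.1 f B mB).2.
Qed.

Lemma g_sigma_probe_sub_measurable : G `<=` measurable.
Proof.
apply: g_sigma_range_sub_measurable => -[n q].
have := measurable_Re_ip (probe n) measurableT (measurable_itv `]-oo, ratr q[).
by rewrite setTI; congr measurable; apply/seteqP; split => t /=; rewrite in_itv.
Qed.

Lemma g_sigma_probe_Re_ip f (B : set R) : measurable B -> G (Re_ip f @^-1` B).
Proof.
have [s cvg_s] := hdense_seq_cvg_Re_ip fs_dense f.
apply: (@g_sigma_cvg_preimage _ _ _ _ _ (fun k => (s k).*2)) => t.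
rewrite /probe_coord /probe; under eq_fun do rewrite odd_double doubleK.
exact: cvg_s.
Qed.

Definition support_piece j : set X :=
  if @choice.unpickle (nat * nat)%type j is Some (n, k)
  then [set t | k.+1%:R^-1 < `|probe_coord n t|] else set0.

Definition support := \bigcup_j support_piece j.

Definition support_trace := [set E | G E /\ E `<=` support].

Lemma g_sigma_support_piece j : G (support_piece j).
Proof.
rewrite /support_piece; case: (choice.unpickle j) => [[n k]|];
  last exact: (@measurable0 _ T0).
apply: (@g_sigma_probe_Re_ip (probe n) [set x : R | k.+1%:R^-1 < `|x|]).
have := @normr_measurable R setT measurableT _
  (measurable_itv `]k.+1%:R^-1, +oo[).
rewrite setTI; congr measurable.
by apply/seteqP; split => x; rewrite /= in_itv /= andbT.
Qed.

Lemma support_piece_lt_pinfty j : (mu (support_piece j) < +oo)%E.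
Proof.
have [_ [b bessel]] := phi_bessel.
have := g_sigma_probe_sub_measurable (g_sigma_support_piece j).
rewrite /support_piece; case: (choice.unpickle j) => [[n k] mP|_];
  last by rewrite measure0.
have k_gt0 : 0 < k.+1%:R^-1 :> R by rewrite invr_gt0.
have k2_gt0 : 0 < k.+1%:R^-1 ^+ 2 :> R by rewrite exprn_gt0.
apply: (measure_lt_pinfty_markov mP k2_gt0 (measurable_normc_ip (probe n)) _ _
  (bessel _)).
  by move=> t; exact: sqr_ge0.
move=> t /= lt_coord.
rewrite normc_sqr -[probe_coord _ _]/(complex.Re _) in lt_coord *.
move: lt_coord k_gt0; set r := complex.Re _; set i := complex.Im _.
set a := k.+1%:R^-1 => lt_r a_gt0.
have nr : `|r| ^+ 2 = r ^+ 2 by rewrite real_normK ?num_real.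
by have := sqr_ge0 i; nra.
Qed.

Lemma sigma_finite_support : sigma_finite_subset mu support.
Proof.
exists support_piece; split; last by split; [exact: support_piece_lt_pinfty|].
by move=> j; exact: g_sigma_probe_sub_measurable (g_sigma_support_piece j).
Qed.

Lemma g_sigma_support : G support.
Proof. exact: (@bigcupT_measurable _ T0 _ g_sigma_support_piece). Qed.

Lemma phi_eq0_off_support t : ~ support t -> phi t = 0.
Proof.
move=> nXt; have coord0 n : probe_coord n t = 0.
  apply: contra_notP nXt => /eqP coord_neq0.
  have coord_gt0 : 0 < `|probe_coord n t| by rewrite normr_gt0.
  have [N _ NP] := near_infty_natSinv_lt (PosNum coord_gt0).
  exists (choice.pickle (n, N)); first by [].
  by rewrite /support_piece choice.pickleK; exact: (NP N (leqnn N)).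
apply: (hdense_seq_orthogonal_eq0 fs_dense) => m.
apply/eqP; rewrite eq_complex /=; apply/andP; split; apply/eqP.
  by have := coord0 m.*2; rewrite /probe_coord /probe odd_double doubleK.
have := coord0 m.*2.+1.
by rewrite /probe_coord /probe /= odd_double uphalf_double -Im_ip_Re.
Qed.

Lemma sigma_algebra_support_trace : sigma_algebra support support_trace.
Proof. exact: (@sigma_algebra_trace _ T0 _ g_sigma_support). Qed.

Lemma support_trace_sub :
  support_trace `<=` [set E `&` support | E in measurable].
Proof.
move=> E [GE EX]; exists E; last exact: setIidl.
exact: g_sigma_probe_sub_measurable GE.
Qed.

Lemma cont_bessel_support : cont_bessel hs mu support support_trace phi.
Proof.
have trace_Re f B : measurable B -> support_trace (support `&` Re_ip f @^-1` B).
  move=> mB; split; last by move=> x [].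
  exact: (@measurableI _ T0 _ _ g_sigma_support (g_sigma_probe_Re_ip f mB)).
split=> [f B mB|]; first split; first exact: trace_Re.
  rewrite (_ : (fun t => _) = Re_ip (- 'i%C *: f)); first exact: trace_Re.
  by apply: funext => t; exact: Im_ip_Re.
have [_ [b bessel]] := phi_bessel; exists b => f; apply: le_trans (bessel f).
have mX := g_sigma_probe_sub_measurable g_sigma_support.
apply: ge0_subset_integral => //; first exact: measurable_normc_ip.
by move=> t _; rewrite lee_fin sqr_ge0.
Qed.

Lemma meas_alg_separable_support_trace : meas_alg_separable mu support_trace.
Proof.
apply: meas_alg_separable_g_sigma; last exact: support_piece_lt_pinfty.
  move=> p; apply: g_sigma_probe_sub_measurable.
  by apply: sub_sigma_algebra; exists p.
exact: g_sigma_support_piece.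
Qed.

End BesselSupport.

Theorem corollary2p4 (R : realType) (H : lmodType R[i]) (hs : hilbert H)
  (Hcomplete : hcomplete hs) (Hsep : hseparable hs)
  (d : measure_display) (X : measurableType d) (mu : {measure set X -> \bar R})
  (phi : X -> H) (Hphi : cont_bessel hs mu setT measurable phi) :
  exists (X' : set X) (M' : set (set X)),
    sigma_finite_subset mu X' /\
    sigma_algebra X' M' /\
    M' `<=` [set E `&` X' | E in measurable] /\
    (forall t, ~ X' t -> phi t = 0) /\
    cont_bessel hs mu X' M' phi /\
    meas_alg_separable mu M'.
Proof.
have [fs fs_dense] := hseparable_dense_seq Hsep.
exists (support hs fs phi), (support_trace hs fs phi).
split; first exact: sigma_finite_support.
split; first exact: sigma_algebra_support_trace.
split; first exact: (support_trace_sub Hphi).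
split; first exact: phi_eq0_off_support.
split; first exact: cont_bessel_support.
exact: meas_alg_separable_support_trace.
Qed.
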